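(* Let $\Gamma$ be a triangulation of a connected closed surface $M$ and let $\tau$ be a $z$-orientation of $\Gamma$. Then every face of $\Gamma$ satisfies exactly one of the following: (I) the face contains two edges of type I and its third edge is of type II; (II) all three edges of the face are of type II and, with their directions, they form a directed cycle.
   Context: Let $M$ be a connected closed $2$-dimensional surface (not necessarily orientable). A triangulation of $M$ is a $2$-cell embedding of a connected simple finite graph in $M$ such that every face is a triangle; then every edge lies in exactly two distinct faces, and two distinct faces meet in an edge, in a vertex, or not at all. A zigzag in a triangulation $\Gamma$ is a sequence of edges $(e_i)_{i\in\mathbb N}$ such that for every $i$: $e_i$ and $e_{i+1}$ are distinct edges of a common face; the face containing $e_i,e_{i+1}$ is different from the face containing $e_{i+1},e_{i+2}$; and $e_i$, $e_{i+2}$ have no common vertex. Such a sequence is periodic and is regarded as a cyclic sequence $e_1,\dots,e_n$ ($n$ the minimal period); a zigzag passes through each of its edges in a definite direction (from the vertex shared with the previous edge to the vertex shared with the next). The reversed sequence $Z^{-1}$ is again a zigzag and $Z\neq Z^{-1}$. If $\Gamma$ has exactly $k$ zigzags up to reversal, a $z$-orientation of $\Gamma$ is a set $\tau$ of $k$ zigzags containing exactly one of $Z,Z^{-1}$ for every zigzag $Z$. For a $z$-orientation $\tau$, each edge $e$ either occurs twice in one zigzag of $\tau$ and in no other, or occurs once in each of exactly two distinct zigzags of $\tau$ and in no other. The edge $e$ is of type I if these two passages through $e$ are in opposite directions, and of type II if they are in the same direction; edges of type II are regarded as directed edges with this common direction. *)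

From mathcomp Require Import all_boot.
Set Implicit Arguments. Unset Strict Implicit. Unset Printing Implicit Defensive.

Section Tri.
Variable V : finType.

Definition is_edge (F : {set {set V}}) (e : {set V}) : bool :=
  (#|e| == 2) && [exists f in F, e \subset f].

Definition adj (F : {set {set V}}) : rel V :=
  fun u w => (u != w) && is_edge F [set u; w].

Definition star_adj (F : {set {set V}}) (v : V) : rel {set V} :=
  fun f g => [&& f \in F, g \in F, v \in f, v \in g, f != g & #|f :&: g| == 2].

Definition triangulation (F : {set {set V}}) : Prop :=
  (F != set0 /\ (forall f, f \in F -> #|f| = 3)) /\
  [/\
      (forall v : V, exists2 f, f \in F & v \in f),
      (forall e, is_edge F e -> #|[set f in F | e \subset f]| = 2),
      (* the link of each vertex is a single cycle (closed surface) *)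
      (forall v f g, f \in F -> g \in F -> v \in f -> v \in g ->
         connect (star_adj F v) f g)
    &
      (forall u w : V, connect (adj F) u w)].

Definition zz (s : seq {set V}) (i : nat) : {set V} := nth set0 s (i %% size s).

(* A zigzag, regarded as a cyclic sequence e_0, ..., e_{n-1} (n minimal period). *)
Definition is_zigzag (F : {set {set V}}) (s : seq {set V}) : Prop :=
  (0 < size s /\ (forall k, 0 < k < size s -> rot k s != s)) /\
  [/\
      (forall i, is_edge F (zz s i)),
      (forall i, zz s i != zz s i.+1 /\
                 exists2 f, f \in F & (zz s i \subset f) && (zz s i.+1 \subset f)),
      (forall i f g, f \in F -> g \in F ->
         zz s i \subset f -> zz s i.+1 \subset f ->
         zz s i.+1 \subset g -> zz s i.+2 \subset g -> f != g)
    & (forall i, [disjoint zz s i & zz s i.+2])].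

Definition same_zig (s t : seq {set V}) : Prop := exists k, rot k s = t.

(* z-orientation: a set of zigzags containing exactly one of Z, Z^{-1}
   for every zigzag Z. *)
Definition z_orientation (F : {set {set V}}) (tau : seq (seq {set V})) : Prop :=
  [/\ (forall s, s \in tau -> is_zigzag F s),
      (forall i j, i < size tau -> j < size tau -> i != j ->
         ~ same_zig (nth [::] tau i) (nth [::] tau j))
    & (forall s, is_zigzag F s ->
         ((exists2 t, t \in tau & same_zig t s) /\
          ~ (exists2 t, t \in tau & same_zig t (rev s))) \/
         (~ (exists2 t, t \in tau & same_zig t s) /\
          (exists2 t, t \in tau & same_zig t (rev s))))].

(* direction of the passage of s through its i-th edge:
   (vertex shared with previous edge, vertex shared with next edge),
   both given as singleton sets. *)
Definition passage_dir (s : seq {set V}) (i : nat) : {set V} * {set V} :=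
  (zz s (i + (size s).-1) :&: zz s i, zz s i :&: zz s i.+1).

Definition passages (tau : seq (seq {set V})) (e : {set V}) :
    seq ({set V} * {set V}) :=
  flatten [seq [seq passage_dir s i | i <- iota 0 (size s) & nth set0 s i == e]
          | s <- tau].

Definition typeI (tau : seq (seq {set V})) (e : {set V}) : Prop :=
  exists x y : V, passages tau e = [:: ([set x], [set y]); ([set y], [set x])].

Definition typeII_dir (tau : seq (seq {set V})) (e : {set V}) (x y : V) : Prop :=
  passages tau e = [:: ([set x], [set y]); ([set x], [set y])].

Definition typeII (tau : seq (seq {set V})) (e : {set V}) : Prop :=
  exists x y : V, typeII_dir tau e x y.

Definition face_caseI (tau : seq (seq {set V})) (f : {set V}) : Prop :=
  exists a b c : V, [/\ f = [set a; b; c], a != b, b != c & a != c] /\ [/\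
    typeI tau [set a; b], typeI tau [set b; c] & typeII tau [set c; a]].

Definition face_caseII (tau : seq (seq {set V})) (f : {set V}) : Prop :=
  (forall e : {set V}, e \subset f -> #|e| = 2 -> typeII tau e) /\
  exists a b c : V, [/\ f = [set a; b; c], a != b, b != c & a != c] /\ [/\
    typeII_dir tau [set a; b] a b, typeII_dir tau [set b; c] b c
    & typeII_dir tau [set c; a] c a].

End Tri.

From mathcomp Require Import all_boot zify.
Set Implicit Arguments. Unset Strict Implicit. Unset Printing Implicit Defensive.

(* In a triangulation every edge lies in exactly two faces, so two consecutive
   edges (u, w) of a zigzag determine the next one: it is the edge of the other
   face through w that avoids u.  Hence a zigzag is determined by any two of its
   consecutive edges, and since tau contains exactly one of Z and Z^-1, every
   ordered corner (u, w) of a face is traversed by tau either as u then w or as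
   w then u, but not both.  For a face abc let p, q, r record the order in which
   the corners (ab, bc), (bc, ca), (ca, ab) are traversed.  The two passages
   through ab come from the corners (ab, bc) and (ca, ab) and go from a to b iff
   p, resp. r; so ab is of type II iff p = r, and likewise bc iff q = p and ca
   iff r = q.  If p = q = r the three edges are of type II and form a directed
   cycle; otherwise exactly one of the equalities holds: case (I). *)

Lemma nth_rot_mod (T : Type) (x0 : T) (s : seq T) k i : k <= size s -> i < size s ->
  nth x0 (rot k s) i = nth x0 s ((i + k) %% size s).
Proof.
move=> ks iS; rewrite /rot nth_cat size_drop.
case: ltnP => h.
  by rewrite nth_drop modn_small 1?addnC //; lia.
rewrite nth_take; last by lia.
have -> : i + k = (i - (size s - k)) + size s by lia.
by rewrite modnDr modn_small //; lia.
Qed.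

Lemma triangle_edges (V : finType) (h u w : {set V}) : #|h| = 3 ->
  u \subset h -> w \subset h -> #|u| = 2 -> #|w| = 2 -> u != w ->
  u :|: w = h /\ #|u :&: w| = 1.
Proof.
move=> h3 uh wh u2 w2 uw.
have U3 : #|u :|: w| <= 3 by rewrite -h3 subset_leq_card // subUset uh.
have I2 : #|u :&: w| <= 2 by rewrite -u2 subset_leq_card // subsetIl.
have I1 : #|u :&: w| != 2.
  apply: contra uw => /eqP I2'.
  have /eqP E1 : u :&: w == u by rewrite eqEcard subsetIl I2' u2.
  have /eqP E2 : u :&: w == w by rewrite eqEcard subsetIr I2' w2.
  by rewrite -E1 E2.
have UI := cardsUI u w.
have C3 : #|u :|: w| = 3 by lia.
split; last by lia.
by apply/eqP; rewrite eqEcard subUset uh wh h3 C3.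
Qed.

Lemma setI_eq_setD (T : finType) (A B C : {set T}) : #|A| = 2 ->
  #|A :&: B| = 1 -> #|C :&: A| = 1 -> [disjoint C & B] -> A :&: B = A :\: C.
Proof.
move=> A2 AB1 CA1 dCB; apply/eqP; rewrite eqEcard cardsD A2 [A :&: C]setIC CA1 AB1 leqnn andbT.
apply/subsetP => z; rewrite !inE => /andP[zA zB]; rewrite zA andbT.
by apply/negP => zC; move: dCB => /pred0P /(_ z) /=; rewrite zC zB.
Qed.

Lemma perm_eq_seq2 (T : eqType) (s : seq T) x y :
  perm_eq s [:: x; y] -> s = [:: x; y] \/ s = [:: y; x].
Proof.
move=> P; have := perm_size P.
case: s P => [|a [|b [|]]] // P _.
have [xa|ax] := eqVneq x a.
  by subst x; left; move: P; rewrite perm_cons => /perm_small_eq ->.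
have ay : a = y.
  have : a \in [:: x; y] by rewrite -(perm_mem P) mem_head.
  by rewrite !inE eq_sym (negbTE ax) => /eqP.
subst a; right; have := perm_trans P (permEl (perm_catC [:: x] [:: y])).
by rewrite perm_cons => /perm_small_eq ->.
Qed.

Lemma card3_set3 (T : finType) (f : {set T}) : #|f| = 3 ->
  exists a b c, [/\ f = [set a; b; c], a != b, b != c & a != c].
Proof.
move=> f3; have [a af] : exists a, a \in f by apply/card_gt0P; rewrite f3.
have /cards2P[b [c [bc E]]] : #|f :\ a| == 2.
  by move: (cardsD1 a f); rewrite af f3 add1n => -[<-].
have /setD1P[ba _] : b \in f :\ a by rewrite E !inE eqxx.
have /setD1P[ca _] : c \in f :\ a by rewrite E !inE eqxx orbT.
have ab : a != b by rewrite eq_sym.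
have ac : a != c by rewrite eq_sym.
by exists a, b, c; rewrite -(setD1K af) E setUA.
Qed.

Section CyclicIndex.
Variable V : finType.
Implicit Type s : seq {set V}.

Lemma zz_mod s x : zz s (x %% size s) = zz s x.
Proof. by rewrite /zz modn_mod. Qed.

Lemma zz_modDl s x y : zz s (x %% size s + y) = zz s (x + y).
Proof. by rewrite /zz modnDml. Qed.

Lemma zz_addMn s x c : zz s (x + size s * c) = zz s x.
Proof. by rewrite /zz addnC mulnC modnMDl. Qed.

Lemma zz_nth s i : i < size s -> zz s i = nth set0 s i.
Proof. by move=> lt; rewrite /zz modn_small. Qed.

Lemma zz_rot s k y : k <= size s -> zz (rot k s) y = zz s (y + k).
Proof.
move=> ks; rewrite /zz size_rot.
have [->|sn] := eqVneq s [::]; first by rewrite rot_oversize // !nth_nil.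
have sp : 0 < size s by rewrite lt0n size_eq0.
by rewrite nth_rot_mod ?ltn_pmod // modnDml.
Qed.

End CyclicIndex.

Section TriangleSets.
Variables (T : finType) (u v w : T).
Hypotheses (uv : u != v) (uw : u != w).

Lemma setD_set2_shared : [set u; v] :\: [set v; w] = [set u].
Proof.
apply/setP => z; rewrite !inE.
by case: (eqVneq z u) => [->|_]; [rewrite (negbTE uv) (negbTE uw) | case: (z == v); rewrite ?andbF].
Qed.

Lemma setI_set2_shared : [set u; v] :&: [set v; w] = [set v].
Proof.
apply/setP => z; rewrite !inE.
case: (eqVneq z v) => [->|_]; first by rewrite orbT.
by case: (eqVneq z w) => [->|_]; rewrite ?andbF /= ?orbF 1?eq_sym ?(negbTE uw).
Qed.

Lemma subset_set3_card2 (y : {set T}) : y \subset [set u; v; w] -> #|y| = 2 ->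
  [\/ y = [set u; v], y = [set v; w] | y = [set w; u]].
Proof.
move=> yf /eqP/cards2P [p [q [pq E]]]; subst y.
have pf : p \in [set u; v; w] by apply: (subsetP yf); rewrite !inE eqxx.
have qf : q \in [set u; v; w] by apply: (subsetP yf); rewrite !inE eqxx orbT.
move: pf qf pq; rewrite !inE -?orbA => /or3P[]/eqP-> /or3P[]/eqP->; rewrite ?eqxx // => _.
all: first [ by constructor 1 | by constructor 2 | by constructor 3
  | by constructor 1; rewrite setUC | by constructor 2; rewrite setUC
  | by constructor 3; rewrite setUC ].
Qed.

End TriangleSets.

Section Occurrences.
Variable V : finType.
Implicit Types (e : {set V}) (s : seq {set V}) (tau : seq (seq {set V})).

Definition occs tau e : seq (seq {set V} * nat) :=
  flatten [seq [seq (s, i) | i <- [seq i <- iota 0 (size s) | nth set0 s i == e]]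
          | s <- tau].

Lemma passages_occs tau e :
  passages tau e = [seq passage_dir o.1 o.2 | o <- occs tau e].
Proof.
rewrite /passages /occs map_flatten -map_comp; congr flatten; apply: eq_map => s /=.
by rewrite -map_comp.
Qed.

Lemma mem_occs tau e s i :
  ((s, i) \in occs tau e) = [&& s \in tau, i < size s & nth set0 s i == e].
Proof.
apply/idP/idP.
  case/flatten_mapP => t tT /mapP[j].
  by rewrite mem_filter mem_iota leq0n add0n /= => /andP[je jl] [-> ->]; rewrite tT jl je.
case/and3P => sT il ie; apply/flatten_mapP; exists s => //.
by apply/mapP; exists i; rewrite // mem_filter mem_iota ie il.
Qed.

Lemma occs_uniq tau e : uniq tau -> uniq (occs tau e).
Proof.
elim: tau => [|s tau IH] //= /andP[sn ut].
rewrite cat_uniq IH // andbT map_inj_uniq ?filter_uniq ?iota_uniq //; last by move=> ? ? [].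
apply/hasPn => -[t j] /flatten_mapP[t' t'T /mapP[k _ [Et _]]].
by apply/mapP => -[k' _ [Et' _]]; move: sn; rewrite -Et' Et t'T.
Qed.

Definition occ_next (o : seq {set V} * nat) := zz o.1 o.2.+1.
Definition occ_prev (o : seq {set V} * nat) := zz o.1 (o.2 + (size o.1).-1).

Definition occ_nbr o x := occ_next o = x \/ occ_prev o = x.

End Occurrences.

Definition arc (T : finType) (b : bool) (u v : T) : {set T} * {set T} :=
  if b then ([set u], [set v]) else ([set v], [set u]).

(** * Zigzags of a triangulation *)

Section Triangulation.
Variables (V : finType) (F : {set {set V}}).
Hypothesis face_card : forall f, f \in F -> #|f| = 3.
Hypothesis edge_faces : forall e, is_edge F e -> #|[set f in F | e \subset f]| = 2.
Implicit Types (a b c e f g h u w : {set V}) (p : {set V} * {set V}).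

Definition other_face (f e : {set V}) : {set V} :=
  odflt set0 [pick g in [set g in F | e \subset g] :\ f].

Lemma other_faceP f e : f \in F -> e \subset f -> #|e| = 2 ->
  [/\ other_face f e \in F, e \subset other_face f e, other_face f e != f &
      forall g, g \in F -> e \subset g -> g != f -> g = other_face f e].
Proof.
move=> fF ef e2.
have ee : is_edge F e by rewrite /is_edge e2 eqxx; apply/existsP; exists f; rewrite fF.
set S := [set g in F | e \subset g].
have fS : f \in S by rewrite inE fF ef.
have [x Ex] : exists x, S :\ f = [set x].
  by apply/cards1P; move: (edge_faces ee); rewrite -/S (cardsD1 f S) fS add1n => -[->].
have -> : other_face f e = x by rewrite /other_face Ex pick_set1.
have /setD1P[xf /setIdP[xF ex]] : x \in S :\ f by rewrite Ex set11.
split=> // g gF eg gf.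
by apply/set1P; rewrite -Ex !inE gf gF.
Qed.

Definition consecutive (p : {set V} * {set V}) : bool :=
  [&& #|p.1| == 2, #|p.2| == 2, p.1 != p.2 & p.1 :|: p.2 \in F].

Definition zig_next (u w : {set V}) : {set V} :=
  other_face (u :|: w) w :\: (u :&: w).

Lemma zig_next_spec u w : consecutive (u, w) ->
  [/\ consecutive (w, zig_next u w), [disjoint u & zig_next u w],
      w :|: zig_next u w = other_face (u :|: w) w & zig_next (zig_next u w) w = u].
Proof.
case/and4P => /= /eqP u2 /eqP w2 uw fF.
set f := u :|: w in fF *.
have wf : w \subset f by apply: subsetUr.
have uf : u \subset f by apply: subsetUl.
have [gF wg gf gU] := other_faceP fF wf w2.
set g := other_face f w in gF wg gf gU *.
have [_ /eqP/cards1P[v Ev]] := triangle_edges (face_card fF) uf wf u2 w2 uw.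
have Iv z : (z \in u) && (z \in w) = (z == v) by rewrite -in_set1 -Ev inE.
have /andP[vu vw] : (v \in u) && (v \in w) by rewrite Iv.
have -> : zig_next u w = g :\ v by rewrite /zig_next -/f -/g Ev.
have g3 := face_card gF.
have vg : v \in g by apply: (subsetP wg).
have n2 : #|g :\ v| = 2 by move: g3; rewrite (cardsD1 v) vg => -[].
have wnE : w :|: (g :\ v) = g.
  apply/setP => z; rewrite !inE; have [->|zv] := eqVneq z v; first by rewrite vw.
  by case zw: (z \in w) => //=; rewrite (subsetP wg _ zw).
have wn : w != g :\ v by apply: contraTneq vw => ->; rewrite !inE eqxx.
have disj : [disjoint u & g :\ v].
  apply/pred0P => z /=; rewrite !inE.
  case zu: (z \in u) => //=; have [//|zv] /= := eqVneq z v.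
  apply/negP => zg.
  have zw : z \notin w by apply: contra zv => zw; rewrite -Iv zu zw.
  have /eqP Eg : z |: w == g by rewrite eqEcard subUset sub1set zg wg g3 cardsU1 zw w2.
  have /eqP Ef : z |: w == f.
    by rewrite eqEcard subUset sub1set (subsetP uf _ zu) wf face_card // cardsU1 zw w2.
  by move/eqP: gf; apply; rewrite -Eg Ef.
split=> //; first by rewrite /consecutive /= w2 n2 wn wnE gF.
have [_ _ _ gU'] := other_faceP gF wg w2.
rewrite /zig_next setUC wnE.
have -> : other_face g w = f by apply/esym/gU'; rewrite // eq_sym.
apply/setP => z; rewrite !inE; have := Iv z.
by case: (z \in u); case zw: (z \in w) => /= Ez; rewrite ?andbF ?andbT -?Ez ?(subsetP wg _ zw).
Qed.

Lemma zig_next_eq a b c h1 h2 :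
  #|a| = 2 -> #|b| = 2 -> #|c| = 2 -> a != b ->
  h1 \in F -> a \subset h1 -> b \subset h1 ->
  h2 \in F -> b \subset h2 -> c \subset h2 -> h1 != h2 ->
  [disjoint a & c] -> consecutive (a, b) /\ c = zig_next a b.
Proof.
move=> a2 b2 c2 ab h1F ah1 bh1 h2F bh2 ch2 h12 dac.
have [U1 _] := triangle_edges (face_card h1F) ah1 bh1 a2 b2 ab.
have Cab : consecutive (a, b) by rewrite /consecutive /= a2 b2 ab U1 h1F.
split=> //.
have [/and4P[_ /= /eqP n2 _ _] _ _ _] := zig_next_spec Cab.
have [_ _ _ hU] := other_faceP h1F bh1 b2.
have h2E : h2 = other_face h1 b by apply: hU; rewrite // eq_sym.
apply/eqP; rewrite eqEcard n2 c2 leqnn andbT.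
apply/subsetP => z zc; rewrite /zig_next U1 -h2E !inE (subsetP ch2 _ zc) andbT.
by apply/negP => /andP[za _]; move: dac => /pred0P /(_ z) /=; rewrite za zc.
Qed.

Section Zigzag.
Variable s : seq {set V}.
Hypothesis zs : is_zigzag F s.

Lemma zigzag_size_gt0 : 0 < size s.
Proof. by case: zs => -[]. Qed.

Lemma zigzag_next i :
  consecutive (zz s i, zz s i.+1) /\ zz s i.+2 = zig_next (zz s i) (zz s i.+1).
Proof.
have [_ [Z1 Z2 Z3 Z4]] := zs.
have /andP[/eqP a2 _] := Z1 i; have /andP[/eqP b2 _] := Z1 i.+1.
have /andP[/eqP c2 _] := Z1 i.+2.
have [ab [h1 h1F /andP[ah1 bh1]]] := Z2 i.
have [_ [h2 h2F /andP[bh2 ch2]]] := Z2 i.+1.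
exact: zig_next_eq (Z3 _ _ _ h1F h2F ah1 bh1 bh2 ch2) (Z4 i).
Qed.

Lemma zigzag_prev i : zz s i = zig_next (zz s i.+2) (zz s i.+1).
Proof.
have [_ [Z1 Z2 Z3 Z4]] := zs.
have /andP[/eqP a2 _] := Z1 i; have /andP[/eqP b2 _] := Z1 i.+1.
have /andP[/eqP c2 _] := Z1 i.+2.
have [_ [h1 h1F /andP[ah1 bh1]]] := Z2 i.
have [bc [h2 h2F /andP[bh2 ch2]]] := Z2 i.+1.
have h21 : h2 != h1 by rewrite eq_sym (Z3 _ _ _ h1F h2F ah1 bh1 bh2 ch2).
have dca : [disjoint zz s i.+2 & zz s i] by rewrite disjoint_sym Z4.
have cb : zz s i.+2 != zz s i.+1 by rewrite eq_sym.
by have [] := zig_next_eq c2 b2 a2 cb h2F ch2 bh2 h1F bh1 ah1 h21 dca.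
Qed.

(* the minimality of the period [size s] is used here *)
Lemma zigzag_period_dvd d : (forall x, zz s (x + d) = zz s x) -> size s %| d.
Proof.
move: zs => [[sp Hrot] _] Hd.
apply/negPn/negP => nd.
have Hk : 0 < d %% size s < size s by rewrite lt0n nd ltn_pmod.
move/negP: (Hrot _ Hk); apply; apply/eqP/(@eq_from_nth _ set0).
  by rewrite size_rot.
move=> i; rewrite size_rot => iS.
rewrite nth_rot_mod //; last by apply: ltnW; rewrite ltn_pmod.
by rewrite -(zz_nth iS) -(Hd i) /zz modnDmr.
Qed.

End Zigzag.

Section TwoZigzags.
Variables s t : seq {set V}.
Hypotheses (zs : is_zigzag F s) (zt : is_zigzag F t).

Lemma zigzag_shift i j : zz s i = zz t j -> zz s i.+1 = zz t j.+1 ->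
  forall x, zz s x = zz t (x + (j + size s * i - i)).
Proof.
move=> E0 E1.
have fw k : zz s (i + k) = zz t (j + k) /\ zz s (i + k).+1 = zz t (j + k).+1.
  elim: k => [|k [IH1 IH2]]; first by rewrite !addn0.
  rewrite !addnS; split=> //.
  by rewrite (zigzag_next zs (i + k)).2 (zigzag_next zt (j + k)).2 IH1 IH2.
move=> x; have sp := zigzag_size_gt0 zs.
have le : i <= size s * i by rewrite leq_pmull.
rewrite -(zz_addMn s x i).
have -> : x + size s * i = i + (x + size s * i - i) by lia.
by rewrite (fw _).1; congr zz; lia.
Qed.

(* In the reverse direction the step is [-1], i.e. [(size s).-1] modulo [size s]. *)
Lemma zigzag_rev_shift i j : zz s i = zz t j.+1 -> zz s i.+1 = zz t j ->
  forall k, zz t (j + k) = zz s (i.+1 + (size s).-1 * k).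
Proof.
move=> E0 E1.
have sp := zigzag_size_gt0 zs.
set c := (size s).-1.
have cn : c.+1 = size s by rewrite /c prednK.
suff H k : zz t (j + k) = zz s (i.+1 + c * k) /\ zz t (j + k.+1) = zz s (i.+1 + c * k.+1).
  by move=> k; case: (H k).
elim: k => [|k [IH1 IH2]].
  rewrite addn0 muln0 addn0 -E1 addn1 -E0 muln1 -(zz_addMn s i 1); split=> //.
  by congr zz; rewrite -cn; lia.
split=> //.
rewrite !addnS (zigzag_next zt (j + k)).2 IH1 -addnS IH2.
rewrite (zigzag_prev zs (i.+1 + c * k.+2)); congr zig_next.
  by rewrite -(zz_addMn s (i.+1 + c * k) 2); congr zz; rewrite -cn !mulnS; lia.
by rewrite -(zz_addMn s (i.+1 + c * k.+1) 1); congr zz; rewrite -cn !mulnS; lia.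
Qed.

End TwoZigzags.

Lemma zigzag_rot_eq s t i j : is_zigzag F s -> is_zigzag F t ->
  zz s i = zz t j -> zz s i.+1 = zz t j.+1 -> exists m, rot m t = s.
Proof.
move=> zs zt E0 E1.
have Sh := zigzag_shift zs zt E0 E1.
have Sh' := zigzag_shift zt zs (esym E0) (esym E1).
set d := j + size s * i - i in Sh.
have D1 : size s %| size t.
  by apply: (zigzag_period_dvd zs) => x; rewrite Sh (Sh x) addnAC -[size t]muln1 zz_addMn.
have D2 : size t %| size s.
  by apply: (zigzag_period_dvd zt) => x; rewrite Sh' (Sh' x) addnAC -[size s]muln1 zz_addMn.
have Es : size s = size t by apply/eqP; rewrite eqn_dvd D1 D2.
have tp := zigzag_size_gt0 zt.
exists (d %% size t); apply: (@eq_from_nth _ set0); first by rewrite size_rot Es.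
move=> y; rewrite size_rot => yl.
rewrite nth_rot_mod //; last by apply: ltnW; rewrite ltn_pmod.
by rewrite -[nth set0 s y]zz_nth ?Es // (Sh y) /zz modnDmr.
Qed.

Lemma zigzag_index_eq s i j : is_zigzag F s ->
  zz s i = zz s j -> zz s i.+1 = zz s j.+1 -> i %% size s = j %% size s.
Proof.
move=> zs.
have sp := zigzag_size_gt0 zs.
suff H i' j' : i' < size s -> j' < size s -> i' <= j' ->
    zz s i' = zz s j' -> zz s i'.+1 = zz s j'.+1 -> i' = j'.
  move=> E0 E1.
  have E0' : zz s (i %% size s) = zz s (j %% size s) by rewrite !zz_mod.
  have E1' : zz s (i %% size s).+1 = zz s (j %% size s).+1.
    by rewrite -[(i %% _).+1]addn1 -[(j %% _).+1]addn1 !zz_modDl !addn1.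
  have li : i %% size s < size s by rewrite ltn_pmod.
  have lj : j %% size s < size s by rewrite ltn_pmod.
  case: (leqP (i %% size s) (j %% size s)) => h; first exact: H.
  by apply/esym/H; rewrite ?E0' ?E1' //; apply: ltnW.
move=> li lj ij E0 E1.
have D : size s %| size s * i' + (j' - i').
  apply: (zigzag_period_dvd zs) => x; rewrite (zigzag_shift zs zs E0 E1 x).
  have : i' <= size s * i' by rewrite leq_pmull.
  by move: (size s * i') => N le; congr zz; clear -le ij; lia.
move: D; rewrite dvdn_addr ?dvdn_mulr // => D.
have [h0|h] := posnP (j' - i'); first by apply/eqP; rewrite eqn_leq ij -subn_eq0 h0.
by move: (dvdn_leq h D); rewrite leqNgt (leq_ltn_trans (leq_subr i' j') lj).
Qed.

Lemma zigzag_rev_size_dvd s t i j : is_zigzag F s -> is_zigzag F t ->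
  zz s i = zz t j.+1 -> zz s i.+1 = zz t j -> size t %| size s.
Proof.
move=> zs zt E0 E1.
have R := zigzag_rev_shift zs zt E0 E1.
apply: (zigzag_period_dvd zt) => x.
have le : j <= size t * j by rewrite leq_pmull // (zigzag_size_gt0 zt).
set K := x + size t * j - j.
rewrite -(zz_addMn t (x + size s) j).
have -> : x + size s + size t * j = j + (K + size s) by rewrite /K; lia.
rewrite R mulnDr addnA [_ * size s]mulnC zz_addMn -R.
by rewrite -(zz_addMn t x j); congr zz; rewrite /K; lia.
Qed.

Lemma zigzag_rev_rot s t i j : is_zigzag F s -> is_zigzag F t ->
  zz s i = zz t j.+1 -> zz s i.+1 = zz t j -> exists m, rot m t = rev s.
Proof.
move=> zs zt E0 E1.
have R := zigzag_rev_shift zs zt E0 E1.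
have D1 := zigzag_rev_size_dvd zs zt E0 E1.
have D2 := zigzag_rev_size_dvd zt zs (esym E1) (esym E0).
have Es : size s = size t by apply/eqP; rewrite eqn_dvd D1 D2.
clear D1 D2; have sp := zigzag_size_gt0 zs.
exists ((j + i.+2) %% size t).
apply: (@eq_from_nth _ set0); first by rewrite size_rot size_rev Es.
move=> y; rewrite size_rot => yl.
rewrite nth_rot_mod //; last by apply: ltnW; rewrite ltn_pmod // -Es.
rewrite nth_rev; last by rewrite Es.
have -> : nth set0 t ((y + (j + i.+2) %% size t) %% size t) = zz t (j + (y + i.+2)).
  by rewrite /zz modnDmr; congr nth; congr modn; lia.
have ar (n : nat) : y <= n -> i.+1 + n * (y + i.+2) = (n.+1 - y.+1) + n.+1 * (y + i.+1).
  by move=> yc; clear -yc; nia.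
rewrite -Es in yl; rewrite R ar; last by rewrite -ltnS prednK.
by rewrite prednK // zz_addMn zz_nth //; lia.
Qed.

Definition zig_step p := if consecutive p then (p.2, zig_next p.1 p.2) else p.

Definition zig_of p : seq {set V} := map fst (orbit zig_step p).

Lemma zig_step_inj : injective zig_step.
Proof.
move=> [u1 u2] [w1 w2]; rewrite /zig_step /=.
case cu: (consecutive (u1, u2)); case cw: (consecutive (w1, w2)).
- have [_ _ _ Eu] := zig_next_spec cu; have [_ _ _ Ew] := zig_next_spec cw.
  by case=> E2 E3; rewrite -Eu -Ew E3 E2.
- by move=> E; have [] := zig_next_spec cu; rewrite E cw.
- by move=> E; have [] := zig_next_spec cw; rewrite -E cu.
- by [].
Qed.

Lemma consecutive_iter p : consecutive p -> forall i, consecutive (iter i zig_step p).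
Proof.
move=> cp; elim=> //= i IH; rewrite {1}/zig_step IH.
by case: (iter i zig_step p) IH => u w /zig_next_spec[].
Qed.

Lemma zz_zig_of p i : zz (zig_of p) i = (iter i zig_step p).1.
Proof.
have op := order_gt0 zig_step p.
have iter_mod : iter (i %% order zig_step p) zig_step p = iter i zig_step p.
  have Hq q : iter (q * order zig_step p) zig_step p = p.
    by elim: q => [|q IH] //=; rewrite mulSn iterD IH (iter_order zig_step_inj).
  by rewrite {2}(divn_eq i (order zig_step p)) addnC iterD Hq.
rewrite /zz /zig_of size_map size_traject (nth_map p) ?size_traject ?ltn_pmod //.
by rewrite nth_traject ?ltn_pmod // iter_mod.
Qed.

Lemma zz_zig_of_next p i : consecutive p ->
  [/\ zz (zig_of p) i = (iter i zig_step p).1,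
      zz (zig_of p) i.+1 = (iter i zig_step p).2 &
      zz (zig_of p) i.+2 = zig_next (iter i zig_step p).1 (iter i zig_step p).2].
Proof.
move=> cp; set q := iter i zig_step p.
have E1 : iter i.+1 zig_step p = (q.2, zig_next q.1 q.2).
  by rewrite iterS /zig_step consecutive_iter.
have C1 := consecutive_iter cp i.+1; rewrite E1 in C1.
by rewrite !zz_zig_of [iter i.+2 _ _]iterS E1 /zig_step C1.
Qed.

Lemma zig_of_minimal p k : consecutive p ->
  0 < k < size (zig_of p) -> rot k (zig_of p) != zig_of p.
Proof.
move=> cp /andP[k0 kl]; apply/negP => /eqP Er.
have Hk x : zz (zig_of p) (x + k) = zz (zig_of p) x by rewrite -zz_rot ?Er // ltnW.
have Ep : iter k zig_step p = p.
  have [A B _] := zz_zig_of_next k cp; have [A0 B0 _] := zz_zig_of_next 0 cp.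
  move: (Hk 0) (Hk 1); rewrite add0n add1n => H0 H1.
  by rewrite [LHS]surjective_pairing [RHS]surjective_pairing -A -B -A0 -B0 H0 H1.
rewrite size_map size_orbit in kl.
have op := order_gt0 zig_step p.
have := nth_uniq p _ _ (orbit_uniq zig_step p); rewrite size_orbit => /(_ 0 k op kl).
by rewrite /orbit !nth_traject // Ep eqxx => /esym/eqP k0'; rewrite -k0' in k0.
Qed.

Lemma zig_next_faces u w f g : consecutive (u, w) -> f \in F -> g \in F ->
  u \subset f -> w \subset f -> w \subset g -> zig_next u w \subset g -> f != g.
Proof.
move=> cuw fF gF uf wf wg ng.
have /and4P[/eqP u2 /eqP w2 uw uwF] := cuw.
have [/and4P[_ /eqP n2 wn _] _ Eo _] := zig_next_spec cuw.
have [Uf _] := triangle_edges (face_card fF) uf wf u2 w2 uw.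
have [Ug _] := triangle_edges (face_card gF) wg ng w2 n2 wn.
have [_ _ go _] := other_faceP uwF (subsetUr _ _) w2.
by rewrite -Uf -Ug Eo eq_sym.
Qed.

Lemma zig_of_zigzag p : consecutive p -> is_zigzag F (zig_of p).
Proof.
move=> cp; split.
  split=> [|k]; first by rewrite size_map size_orbit order_gt0.
  exact: zig_of_minimal.
have Ci := consecutive_iter cp.
split=> i; have [E0 E1 E2] := zz_zig_of_next i cp; rewrite ?E0 ?E1 ?E2; have := Ci i;
  case: (iter i zig_step p) => u w cuw /=; have /and4P[/eqP u2 _ uw uwF] := cuw.
- by rewrite /is_edge u2 eqxx; apply/existsP; exists (u :|: w); rewrite uwF subsetUl.
- by split=> //; exists (u :|: w); rewrite // subsetUl subsetUr.
- by move=> f g; apply: zig_next_faces.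
- by have [] := zig_next_spec cuw.
Qed.

Lemma consecutive_triangle (u v w : V) : u != v -> v != w -> u != w ->
  [set u; v; w] \in F -> consecutive ([set u; v], [set v; w]).
Proof.
move=> uv vw uw fF; rewrite /consecutive /= !cards2 uv vw.
have -> : [set u; v] :|: [set v; w] = [set u; v; w].
  by apply/setP => z; rewrite !inE; do !case: (_ == _).
rewrite fF andbT /=.
by apply/negP => /eqP/setP/(_ u); rewrite !inE eqxx (negbTE uv) (negbTE uw).
Qed.

(** * Passages of a z-orientation *)

Section ZOrientation.
Variable tau : seq (seq {set V}).
Hypothesis tz : z_orientation F tau.

Lemma tau_uniq : uniq tau.
Proof.
have [_ Z2 _] := tz; apply/(uniqP [::]) => i j il jl E.
by apply/eqP/negP => /negP ij; apply: (Z2 i j il jl ij); exists 0; rewrite rot0.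
Qed.

Lemma tau_rot_eq s t m : s \in tau -> t \in tau -> rot m t = s -> s = t.
Proof.
move=> sT tT E; apply/eqP/negP => /negP st.
have [_ Z2 _] := tz.
have ne : index t tau != index s tau.
  by apply: contra st => /eqP H; rewrite -(nth_index [::] sT) -(nth_index [::] tT) H.
by apply: (Z2 _ _ _ _ ne); rewrite ?index_mem ?nth_index //; exists m.
Qed.

Definition passes u w : Prop :=
  exists2 t, t \in tau & exists i, zz t i = u /\ zz t i.+1 = w.

Definition passes_dir (b : bool) u w := if b then passes u w else passes w u.

Lemma passes_antisym u w : passes u w -> ~ passes w u.
Proof.
move=> [s sT [i [E0 E1]]] [t tT [j [E2 E3]]].
have [Z1 _ Z3] := tz; have zs := Z1 _ sT; have zt := Z1 _ tT.
have [m Em] := zigzag_rev_rot zs zt (etrans E0 (esym E3)) (etrans E1 (esym E2)).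
case: (Z3 _ zs) => [[_ []]|[[]]]; first by exists t => //; exists m.
by exists s => //; exists 0; rewrite rot0.
Qed.

Lemma passes_total u w : consecutive (u, w) -> exists d : bool, passes_dir d u w.
Proof.
move=> cuw; have [Z1 _ Z3] := tz.
have zs := zig_of_zigzag cuw; have [S0 S1 _] := zz_zig_of_next 0 cuw.
rewrite /= in S0 S1; set s := zig_of (u, w) in zs S0 S1.
have s2 : 1 < size s.
  rewrite ltn_neqAle zigzag_size_gt0 // andbT.
  apply: contraTneq cuw => s1.
  have -> : u = w by rewrite -S0 -S1 /zz -s1 mod0n modnn.
  by rewrite /consecutive eqxx /= !andbF.
have from_rot t k r : rot k t = r -> forall x, zz r x = zz t (x + minn k (size t)).
  by move=> <- x; rewrite rot_minn zz_rot // geq_minr.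
case: (Z3 _ zs) => [[[t tT [k /from_rot Hk]] _]|[_ [t tT [k /from_rot Hk]]]].
  exists true, t => //; exists (minn k (size t)).
  by rewrite -[minn _ _]add0n -addSn -!Hk S0 S1.
exists false, t => //; exists ((size s).-2 + minn k (size t)).
have [s2' s1'] : (size s).-2 < size s /\ (size s).-2.+1 < size s by lia.
rewrite -addSn -!Hk !zz_nth ?size_rev // !nth_rev //.
have -> : size s - (size s).-2.+1 = 1 by lia.
have -> : size s - (size s).-2.+2 = 0 by lia.
by split; [rewrite -S1 | rewrite -S0]; rewrite zz_nth //; lia.
Qed.

Lemma occsP e s i : (s, i) \in occs tau e ->
  [/\ s \in tau, is_zigzag F s, i < size s, zz s i = e & zz s (i + (size s).-1).+1 = e].
Proof.
rewrite mem_occs => /and3P[sT il /eqP ie]; have [Z1 _ _] := tz.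
have zs := Z1 _ sT; have sp := zigzag_size_gt0 zs.
split=> //; rewrite -ie -zz_nth //.
by rewrite -(zz_addMn s i 1) muln1 -addnS prednK.
Qed.

Lemma occ_around e o : o \in occs tau e ->
  [/\ consecutive (e, occ_next o), consecutive (occ_prev o, e),
      occ_prev o :|: e != e :|: occ_next o & [disjoint occ_prev o & occ_next o]].
Proof.
case: o => s i /occsP[_ zs _ ze E1]; rewrite /occ_next /occ_prev /=.
have sp := zigzag_size_gt0 zs.
have E2 : zz s (i + (size s).-1).+2 = zz s i.+1.
  by rewrite -(zz_addMn s i.+1 1) muln1 addSn -addnS prednK.
have [C1 _] := zigzag_next zs i; have [C2 _] := zigzag_next zs (i + (size s).-1).
rewrite ze in C1; rewrite E1 in C2.
have [_ [_ _ Z3 Z4]] := zs.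
split=> //; last by have := Z4 (i + (size s).-1); rewrite E2.
have /and4P[_ _ _ F1] := C1; have /and4P[_ _ _ F2] := C2.
by apply: (Z3 (i + (size s).-1)); rewrite ?E1 ?E2 ?ze ?subsetUl ?subsetUr.
Qed.

Lemma occ_passes e o x : o \in occs tau e ->
  (occ_next o = x -> passes e x) /\ (occ_prev o = x -> passes x e).
Proof.
case: o => s i /occsP[sT _ _ ze E1]; rewrite /occ_next /occ_prev /=.
by split=> <-; exists s => //; [exists i | exists (i + (size s).-1)].
Qed.

Lemma passage_dir_occ e o : o \in occs tau e ->
  passage_dir o.1 o.2 = (e :\: occ_next o, e :&: occ_next o) /\
  passage_dir o.1 o.2 = (occ_prev o :&: e, e :\: occ_prev o).
Proof.
move=> oe; have [C1 C2 _ D] := occ_around oe.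
case: o oe C1 C2 D => s i /occsP[_ _ _ ze _].
rewrite /passage_dir /occ_next /occ_prev /= ze.
set N := zz s i.+1; set P := zz s (i + (size s).-1) => C1 C2 D.
move: C1 C2 => /and4P[/= /eqP e2 /eqP n2 en eF] /and4P[/= /eqP p2 _ pe pF].
have [_ I1] := triangle_edges (face_card eF) (subsetUl _ _) (subsetUr _ _) e2 n2 en.
have [_ I2] := triangle_edges (face_card pF) (subsetUl _ _) (subsetUr _ _) p2 e2 pe.
have K1 : P :&: e = e :\: N.
  by rewrite setIC; apply: setI_eq_setD; rewrite 1?setIC // disjoint_sym.
have K2 : e :&: N = e :\: P by apply: setI_eq_setD.
by rewrite K1 K2.
Qed.

Lemma occ_exists f e (x : {set V}) : f \in F -> e \subset f -> x \subset f ->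
  #|e| = 2 -> #|x| = 2 -> e != x -> exists2 o, o \in occs tau e & occ_nbr o x.
Proof.
move=> fF ef xf e2 x2 ex.
have [U _] := triangle_edges (face_card fF) ef xf e2 x2 ex.
have cex : consecutive (e, x) by rewrite /consecutive /= e2 x2 ex U fF.
have [Z1 _ _] := tz.
have [[] [t tT [i [E0 E1]]]] := passes_total cex; have tp := zigzag_size_gt0 (Z1 _ tT).
  exists (t, i %% size t); first by rewrite mem_occs tT ltn_pmod //= -E0.
  by left; rewrite /occ_next /= -E1 -addn1 zz_modDl addn1.
exists (t, i.+1 %% size t); first by rewrite mem_occs tT ltn_pmod //= -E1.
right; rewrite /occ_prev /= zz_modDl -E0 -(zz_addMn t i 1); congr zz.
by rewrite muln1 addSn -addnS prednK.
Qed.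

Lemma occ_unique e (x : {set V}) o o' : o \in occs tau e -> o' \in occs tau e ->
  occ_nbr o x -> occ_nbr o' x -> o = o'.
Proof.
case: o => s i; case: o' => s' i' oe oe'.
have [sT zs il ze E1] := occsP oe; have [sT' zs' il' ze' E1'] := occsP oe'.
have [Pn Pp] := occ_passes x oe; have [Pn' Pp'] := occ_passes x oe'.
rewrite /occ_nbr /occ_next /occ_prev /=.
have sp := zigzag_size_gt0 zs.
case=> R; case=> R'.
- have [m /tau_rot_eq Em] := zigzag_rot_eq zs zs' (etrans ze (esym ze')) (etrans R (esym R')).
  rewrite -(Em sT sT') in R' ze' il' *.
  have := zigzag_index_eq zs (etrans ze (esym ze')) (etrans R (esym R')).
  by rewrite !modn_small // => ->.
- by case: (passes_antisym (Pn R) (Pp' R')).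
- by case: (passes_antisym (Pn' R') (Pp R)).
have [m /tau_rot_eq Em] := zigzag_rot_eq zs zs' (etrans R (esym R')) (etrans E1 (esym E1')).
rewrite -(Em sT sT') in R' E1' il' *.
have := congr1 (fun k => (k + 1) %% size s)
  (zigzag_index_eq zs (etrans R (esym R')) (etrans E1 (esym E1'))).
by rewrite /= !modnDml -!addnA addn1 prednK // !modnDr !modn_small // => ->.
Qed.

Section FaceEdge.
Variables (f e x1 x2 : {set V}).
Hypotheses (fF : f \in F) (ef : e \subset f) (x1f : x1 \subset f) (x2f : x2 \subset f).
Hypotheses (e2 : #|e| = 2) (x12 : x1 != x2).
Hypothesis edges_f : forall y : {set V}, y \subset f -> #|y| = 2 -> [\/ y = e, y = x1 | y = x2].

Lemma occ_nbr_cover o : o \in occs tau e -> occ_nbr o x1 \/ occ_nbr o x2.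
Proof.
move=> oe; have [C1 C2 PN _] := occ_around oe.
move: C1 C2 => /and4P[_ /= /eqP n2 en eF] /and4P[/= /eqP p2 _ pe pF].
have [Nf|Nf] := boolP (occ_next o \subset f).
  by case: (edges_f Nf n2) => E; [rewrite E eqxx in en | left; left | right; left].
have [Pf|Pf] := boolP (occ_prev o \subset f).
  by case: (edges_f Pf p2) => E; [rewrite E eqxx in pe | left; right | right; right].
have [_ _ _ uniq_other] := other_faceP fF ef e2.
have A1 : e :|: occ_next o = other_face f e.
  by apply: uniq_other; rewrite ?subsetUl //; apply: contraNneq Nf => <-; rewrite subsetUr.
have A2 : occ_prev o :|: e = other_face f e.
  by apply: uniq_other; rewrite ?subsetUr //; apply: contraNneq Pf => <-; rewrite subsetUl.
by move: PN; rewrite A1 A2 eqxx.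
Qed.

Lemma occ_nbr_excl o : o \in occs tau e -> occ_nbr o x1 -> occ_nbr o x2 -> False.
Proof.
move=> oe; have [C1 C2 PN _] := occ_around oe.
move: C1 C2 => /and4P[_ /= /eqP n2 en eF] /and4P[/= /eqP p2 _ pe pF].
have on_f (N P : {set V}) : N \subset f -> P \subset f -> occ_next o = N -> occ_prev o = P -> False.
  move=> Nf Pf EN EP; rewrite EN EP in n2 p2 en pe PN.
  have [U1 _] := triangle_edges (face_card fF) ef Nf e2 n2 en.
  have [U2 _] := triangle_edges (face_card fF) Pf ef p2 e2 pe.
  by move: PN; rewrite U1 U2 eqxx.
case=> R1; case=> R2.
- by move: x12; rewrite -R1 -R2 eqxx.
- exact: on_f x1f x2f R1 R2.
- exact: on_f x2f x1f R2 R1.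
- by move: x12; rewrite -R1 -R2 eqxx.
Qed.

Lemma occs_face_edge : e != x1 -> e != x2 -> #|x1| = 2 -> #|x2| = 2 ->
  exists o1 o2, [/\ perm_eq (occs tau e) [:: o1; o2], occ_nbr o1 x1 & occ_nbr o2 x2].
Proof.
move=> ex1 ex2 x1_2 x2_2.
have [o1 o1e R1] := occ_exists fF ef x1f e2 x1_2 ex1.
have [o2 o2e R2] := occ_exists fF ef x2f e2 x2_2 ex2.
exists o1, o2; split=> //.
have o12 : o1 != o2 by apply/eqP => E12; rewrite -E12 in R2; apply: occ_nbr_excl o1e R1 R2.
apply: uniq_perm; rewrite ?occs_uniq ?tau_uniq //= ?inE ?o12 // => o.
apply/idP/idP => [oe|]; last by rewrite !inE => /orP[] /eqP ->.
rewrite !inE; case: (occ_nbr_cover oe) => R.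
  by rewrite (occ_unique oe o1e R R1) eqxx.
by rewrite (occ_unique oe o2e R R2) eqxx orbT.
Qed.

End FaceEdge.

Lemma passage_dir_nbr e x o (b : bool) : o \in occs tau e -> occ_nbr o x ->
  passes_dir b e x ->
  passage_dir o.1 o.2 = if b then (e :\: x, e :&: x) else (x :&: e, e :\: x).
Proof.
move=> oe; have [Pn Pp] := occ_passes x oe; have [D1 D2] := passage_dir_occ oe.
case=> R; case: b => /= P.
- by rewrite D1 R.
- by case: (passes_antisym (Pn R) P).
- by case: (passes_antisym P (Pp R)).
- by rewrite D2 R.
Qed.

Lemma passes_dirN (b : bool) u w : passes_dir (~~ b) u w = passes_dir b w u.
Proof. by case: b. Qed.

Lemma passages_triangle_edge (u v w : V) (p r : bool) :
  u != v -> v != w -> u != w -> [set u; v; w] \in F ->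
  passes_dir p [set u; v] [set v; w] -> passes_dir r [set w; u] [set u; v] ->
  perm_eq (passages tau [set u; v]) [:: arc p u v; arc r u v].
Proof.
move=> uv vw uw fF Hp Hr.
have vu : v != u by rewrite eq_sym.
have wu : w != u by rewrite eq_sym.
have card_set2 (a b : V) : a != b -> #|[set a; b]| = 2 by move=> ab; rewrite cards2 ab.
have sub_f (a b : V) :
    a \in [set u; v; w] -> b \in [set u; v; w] -> [set a; b] \subset [set u; v; w].
  by move=> af bf; rewrite subUset !sub1set af bf.
have neq_set2 (a b c : V) : a != b -> a != c -> [set a; b] != [set b; c].
  by move=> ab ac; apply/negP => /eqP/setP/(_ a); rewrite !inE eqxx (negbTE ab) (negbTE ac).
have uvf : [set u; v] \subset [set u; v; w] by rewrite sub_f ?inE ?eqxx ?orbT.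
have vwf : [set v; w] \subset [set u; v; w] by rewrite sub_f ?inE ?eqxx ?orbT.
have wuf : [set w; u] \subset [set u; v; w] by rewrite sub_f ?inE ?eqxx ?orbT.
have e_x2 : [set u; v] != [set w; u].
  by apply/negP => /eqP/setP/(_ v); rewrite !inE eqxx orbT (negbTE vw) (negbTE vu).
have [o1 [o2 [Po R1 R2]]] := occs_face_edge fF uvf vwf wuf (card_set2 _ _ uv)
  (neq_set2 _ _ _ vw vu) (@subset_set3_card2 _ u v w) (neq_set2 _ _ _ uv uw) e_x2
  (card_set2 _ _ vw) (card_set2 _ _ wu).
have o1e : o1 \in occs tau [set u; v] by rewrite (perm_mem Po) mem_head.
have o2e : o2 \in occs tau [set u; v] by rewrite (perm_mem Po) !inE eqxx orbT.
rewrite passages_occs; apply: perm_trans (perm_map _ Po) _.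
rewrite -passes_dirN in Hr.
rewrite /= (passage_dir_nbr o1e R1 Hp) (passage_dir_nbr o2e R2 Hr).
rewrite setD_set2_shared // setI_set2_shared //.
rewrite [[set v; w] :&: _]setIC setI_set2_shared //.
rewrite [[set u; v]]setUC [[set w; u]]setUC [[set u; w] :&: _]setIC.
by rewrite setD_set2_shared // setI_set2_shared //; case: (r).
Qed.

End ZOrientation.

End Triangulation.

(** * Edge types around a face *)

Section EdgeTypes.
Variables (V : finType) (tau : seq (seq {set V})) (e : {set V}) (u v : V).
Hypothesis uv : u != v.

Lemma arc_inj (b c : bool) : arc b u v = arc c u v -> b = c.
Proof.
have vu : v != u by rewrite eq_sym.
by case: b; case: c => //= -[/set1_inj E _]; [move: uv | move: vu]; rewrite E eqxx.
Qed.

Lemma typeII_dir_of_arcs (b : bool) :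
  perm_eq (passages tau e) [:: arc b u v; arc b u v] ->
  typeII_dir tau e (if b then u else v) (if b then v else u).
Proof. by case/perm_eq_seq2 => E; rewrite /typeII_dir E; case: (b). Qed.

Lemma typeI_of_arcs (b c : bool) : b != c ->
  perm_eq (passages tau e) [:: arc b u v; arc c u v] -> typeI tau e.
Proof.
move=> bc; have {bc}-> : c = ~~ b by move: bc; case: b; case: c.
case/perm_eq_seq2 => E; rewrite /typeI E; clear E.
  by case: b; [exists u, v | exists v, u].
by case: b; [exists v, u | exists u, v].
Qed.

Lemma arcs_neq_of_typeI (b c : bool) :
  perm_eq (passages tau e) [:: arc b u v; arc c u v] -> typeI tau e -> b != c.
Proof.
move=> P [x [y E]]; apply: contraNneq uv => bc; subst c.
rewrite E in P.
have [E1 E2] : ([set x], [set y]) = arc b u v /\ ([set y], [set x]) = arc b u v.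
  by case: (perm_eq_seq2 P) => -[-> ->].
have /set1_inj xy : [set x] = [set y] by move: E2; rewrite -E1 => -[].
by case: b E1 {E2 P} => -[/set1_inj ex /set1_inj ey]; rewrite -ex -ey xy.
Qed.

Lemma arcs_eq_of_typeII (b c : bool) :
  perm_eq (passages tau e) [:: arc b u v; arc c u v] -> typeII tau e -> b = c.
Proof.
move=> P [x [y E]]; apply: arc_inj.
by rewrite E in P; case: (perm_eq_seq2 P) => -[<- <-].
Qed.

End EdgeTypes.

Section FaceCases.
Variables (V : finType) (tau : seq (seq {set V})).

(* [p], [q], [r] orient the corners ([ab], [bc]), ([bc], [ca]), ([ca], [ab]) of the face *)
Definition face_passages (a b c : V) (p q r : bool) : Prop :=
  [/\ perm_eq (passages tau [set a; b]) [:: arc p a b; arc r a b],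
      perm_eq (passages tau [set b; c]) [:: arc q b c; arc p b c]
    & perm_eq (passages tau [set c; a]) [:: arc r c a; arc q c a]].

Lemma face_passages_rot a b c p q r :
  face_passages a b c p q r -> face_passages b c a q r p.
Proof. by case. Qed.

Lemma set3_rot (a b c : V) : [set a; b; c] = [set b; c; a].
Proof. by apply/setP => z; rewrite !inE; do !case: (_ == _). Qed.

Variables (f : {set V}) (a b c : V).
Hypotheses (ab : a != b) (bc : b != c) (ac : a != c) (Ef : f = [set a; b; c]).

Lemma face_caseI_of_passages (p q : bool) : p != q -> face_passages a b c p q q ->
  face_caseI tau f /\ ~ face_caseII tau f.
Proof.
move=> pq [Pab Pbc Pca]; split.
  exists a, b, c; split=> //; split; first exact: typeI_of_arcs Pab.
    by apply: typeI_of_arcs Pbc; rewrite eq_sym.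
  by eexists; eexists; apply: typeII_dir_of_arcs Pca.
case=> /(_ [set a; b]) H _; move/negP: pq; apply; apply/eqP; apply: (arcs_eq_of_typeII ab Pab).
by apply: H; rewrite ?cards2 ?ab // Ef subUset !sub1set !inE !eqxx ?orbT.
Qed.

Lemma face_caseII_of_passages (p : bool) : face_passages a b c p p p ->
  ~ face_caseI tau f /\ face_caseII tau f.
Proof.
have ba : b != a by rewrite eq_sym.
have cb : c != b by rewrite eq_sym.
have ca : c != a by rewrite eq_sym.
move=> [Pab Pbc Pca].
have edges_f (y : {set V}) : y \subset f -> #|y| = 2 ->
    [\/ y = [set a; b], y = [set b; c] | y = [set c; a]].
  by rewrite Ef; apply: subset_set3_card2.
split.
  case=> a' [b' [c' [[Ef' a'b' _ _] [Ia'b' _ _]]]].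
  have /edges_f : [set a'; b'] \subset f by rewrite Ef' subUset !sub1set !inE !eqxx ?orbT.
  rewrite cards2 a'b' => /(_ erefl)[] E; rewrite {}E in Ia'b'.
  - by move/negP: (arcs_neq_of_typeI ab Pab Ia'b'); rewrite eqxx.
  - by move/negP: (arcs_neq_of_typeI bc Pbc Ia'b'); rewrite eqxx.
  - by move/negP: (arcs_neq_of_typeI ca Pca Ia'b'); rewrite eqxx.
have Dab := typeII_dir_of_arcs Pab; have Dbc := typeII_dir_of_arcs Pbc.
have Dca := typeII_dir_of_arcs Pca.
split.
  by move=> y /edges_f H /H[] ->; do 2!eexists; eassumption.
case: (p) Dab Dbc Dca => /= Dab Dbc Dca; first by exists a, b, c.
exists b, a, c; split.
  by split; rewrite // Ef; apply/setP => z; rewrite !inE; do !case: (_ == _).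
by rewrite (setUC [set b] [set a]) (setUC [set a] [set c]) (setUC [set c] [set b]).
Qed.

End FaceCases.

Lemma face_cases (V : finType) (tau : seq (seq {set V})) f (a b c : V) p q r :
  a != b -> b != c -> a != c -> f = [set a; b; c] -> face_passages tau a b c p q r ->
  (face_caseI tau f /\ ~ face_caseII tau f) \/ (~ face_caseI tau f /\ face_caseII tau f).
Proof.
move=> ab bc ac Ef H.
have ba : b != a by rewrite eq_sym.
have cb : c != b by rewrite eq_sym.
have ca : c != a by rewrite eq_sym.
have Ef1 : f = [set b; c; a] by rewrite Ef set3_rot.
have Ef2 : f = [set c; a; b] by rewrite Ef1 set3_rot.
have H1 := face_passages_rot H; have H2 := face_passages_rot H1.
(* rotate the face until the pattern of [p], [q], [r] is [(x, y, y)] *)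
case: p q r H H1 H2 => [] [] [] H H1 H2.
- by right; apply: face_caseII_of_passages H.
- by left; apply: face_caseI_of_passages ca ab cb Ef2 false true _ H2.
- by left; apply: face_caseI_of_passages bc ca ba Ef1 false true _ H1.
- by left; apply: face_caseI_of_passages ab bc ac Ef true false _ H.
- by left; apply: face_caseI_of_passages ab bc ac Ef false true _ H.
- by left; apply: face_caseI_of_passages bc ca ba Ef1 true false _ H1.
- by left; apply: face_caseI_of_passages ca ab cb Ef2 true false _ H2.
- by right; apply: face_caseII_of_passages H.
Qed.

Theorem proposition1 (V : finType) (F : {set {set V}})
    (tau : seq (seq {set V})) :
  triangulation F -> z_orientation F tau ->
  forall f, f \in F ->
    (face_caseI tau f /\ ~ face_caseII tau f) \/
    (~ face_caseI tau f /\ face_caseII tau f).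
Proof.
move=> [[_ face_card] [_ edge_faces _ _]] tz f fF.
have [a [b [c [Ef ab bc ac]]]] := card3_set3 (face_card f fF).
have ba : b != a by rewrite eq_sym.
have cb : c != b by rewrite eq_sym.
have ca : c != a by rewrite eq_sym.
have F1 : [set a; b; c] \in F by rewrite -Ef.
have F2 : [set b; c; a] \in F by rewrite -set3_rot.
have F3 : [set c; a; b] \in F by rewrite -set3_rot.
have [p Hp] := passes_total face_card edge_faces tz (consecutive_triangle ab bc ac F1).
have [q Hq] := passes_total face_card edge_faces tz (consecutive_triangle bc ca ba F2).
have [r Hr] := passes_total face_card edge_faces tz (consecutive_triangle ca ab cb F3).
apply: (face_cases ab bc ac Ef (p := p) (q := q) (r := r)); split.
- exact: (passages_triangle_edge face_card edge_faces tz ab bc ac F1 Hp Hr).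
- exact: (passages_triangle_edge face_card edge_faces tz bc ca ba F2 Hq Hp).
- exact: (passages_triangle_edge face_card edge_faces tz ca ab cb F3 Hr Hq).
Qed.
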